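(* Let $C_g$ and $C_h$ be two monotone curves in $[0,N-k]\times[0,k]$ such that $\lfloor g(j)\rfloor=\lfloor h(j)\rfloor$ for every $j=1,\dots,N-k-1$. Then the links $L_g$ and $L_h$ are isotopic.
   Context: Fix $1\le k<N$. A monotone curve $C_g$ is the graph of a strictly increasing function $g:[0,N-k]\to[0,k]$ with $g(0)=0$, $g(N-k)=k$, and $g(j)\notin\mathbb Z$ for $j=1,\dots,N-k-1$. The link $L_g$ is defined as follows. Map each point $p=(x,g(x))$ of $C_g$ to $(\bar p,\,1-\frac x{N-k})\in T\times[0,1]$, where $\bar p$ is the image of $p$ in the torus $T=\mathbb R^2/\mathbb Z^2$. Then join $((0,0),1)$ to $((0,0),0)$ by a vertical segment. Equivalently, the diagram of $L_g$ on $T$ is the projection of $C_g$. Wherever two points $(x,g(x))$ and $(x',g(x'))$ with $x<x'$ project to the same point, the strand through $(x,g(x))$ is drawn above. $L_g$ is viewed as a link in the thickened torus $T\times[0,1]$, and isotopy is taken there. *)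

From HB Require Import structures.
From mathcomp Require Import all_boot all_order all_algebra.
From mathcomp Require Import all_classical all_reals topology normedtype.
Set Implicit Arguments. Unset Strict Implicit. Unset Printing Implicit Defensive.
Import Order.TTheory GRing.Theory Num.Theory numFieldNormedType.Exports.
Local Open Scope classical_set_scope.
Local Open Scope ring_scope.

Section Defs.
Variable R : realType.

(* points of the universal cover R^2 x R of T x R; T x [0,1] is the slab
   modulo the deck group Z^2 acting on the first two coordinates *)
Definition pt := ((R * R) * R)%type.

Definition slab : set pt := [set p | 0 <= p.2 <= 1].

Definition monotone_curve (N k : nat) (g : R -> R) : Prop :=
  [/\ {within [set x : R | 0 <= x <= (N - k)%:R], continuous g},
      {in `[0, (N - k)%:R] &, forall x y, x < y -> g x < g y},
      g 0 = 0, g (N - k)%:R = k%:R &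
      forall j : nat, (1 <= j <= N - k - 1)%N -> g j%:R \isn't a Num.int].

(* preimage in R^2 x [0,1] of the link L_g in T x [0,1]:
   the lifted curve points (x, g x, 1 - x/(N-k)) mod Z^2 together with
   the vertical segment over (0,0) mod Z^2 *)
Definition link_lift (N k : nat) (g : R -> R) : set pt :=
  [set p | 0 <= p.2 <= 1 /\
    ((exists x : R, [/\ 0 <= x <= (N - k)%:R,
        p.2 = 1 - x / (N - k)%:R,
        p.1.1 - x \is a Num.int & p.1.2 - g x \is a Num.int])
     \/ (p.1.1 \is a Num.int /\ p.1.2 \is a Num.int))].

Definition shift (m n : int) (p : pt) : pt :=
  (p.1.1 + m%:~R, p.1.2 + n%:~R, p.2).

(* ambient isotopy of T x [0,1], described through its (unique)
   lift to the universal cover starting at the identity: a continuous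
   family of Z^2-equivariant homeomorphisms of the slab R^2 x [0,1]. *)
Definition ambient_isotopy (H : R -> pt -> pt) : Prop :=
  [/\ {within [set q : R * pt | 0 <= q.1 <= 1 /\ slab q.2],
         continuous (fun q : R * pt => H q.1 q.2)},
      (forall t, 0 <= t <= 1 ->
         exists Hi : pt -> pt,
           [/\ {within slab, continuous Hi},
               (forall p, slab p -> slab (H t p)),
               (forall p, slab p -> slab (Hi p)),
               (forall p, slab p -> Hi (H t p) = p) &
               (forall p, slab p -> H t (Hi p) = p)]),
      (forall t, 0 <= t <= 1 -> forall (m n : int) p, slab p ->
         H t (shift m n p) = shift m n (H t p)) &
      (forall p, slab p -> H 0 p = p)].

Definition links_isotopic (N k : nat) (g h : R -> R) : Prop :=
  exists H : R -> pt -> pt,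
    ambient_isotopy H /\ H 1 @` link_lift N k g = link_lift N k h.

End Defs.

From HB Require Import structures.
From mathcomp Require Import all_boot all_order all_algebra.
From mathcomp Require Import all_classical all_reals topology normedtype trigo.
From mathcomp Require Import ring lra zify.
Set Implicit Arguments. Unset Strict Implicit. Unset Printing Implicit Defensive.
Import Order.TTheory GRing.Theory Num.Theory numFieldNormedType.Exports.
Local Open Scope classical_set_scope.
Local Open Scope ring_scope.

(* At height z both links meet the torus in the origin (the vertical strand) and in
   one curve point, (x, g x) resp. (x, h x) with the same x = (N - k)(1 - z).  So it
   suffices to move (x, g x) to (x, h x) inside each horizontal torus, continuously in
   z.  We do this on R^2 by four shears, each displacing one coordinate by an amount
   that is 1-periodic in the other coordinate and vanishes at integers (it is built
   from sin^2 (pi y)); shears are homeomorphisms, Z^2-equivariant and fix the lattice,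
   so the only issue is continuity of their amplitudes in z.  A vertical shear cannot
   move a point of an integer column and a horizontal shear cannot move a point at
   integer height; hence the point first moves right by a small offset, then up, back
   left to its column, and up again.  The offset is positive at the interior integer
   columns j, where by hypothesis g j and h j are non-integers with the same floor, so
   no height passed through there is an integer; at the end columns g and h agree. *)

Lemma continuous_pair (T U V : topologicalType) (f : T -> U) (g : T -> V) :
  continuous f -> continuous g -> continuous (fun x => (f x, g x)).
Proof. by move=> cf cg x; apply: cvg_pair; [exact: cf | exact: cg]. Qed.

Lemma continuous_within_comp (T U V : topologicalType) (A : set U)
    (f : T -> U) (g : U -> V) :
  {within A, continuous g} -> continuous f -> (forall x, A (f x)) ->
  continuous (g \o f).
Proof.
move=> /subspace_continuousP cg cf Af x P /= gfxP.
have /cf : nbhs (f x) (fun y => A y -> P (g y)) := cg _ (Af x) P gfxP.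
by rewrite !nbhs_simpl /=; apply: filterS => y; exact.
Qed.

Section RealFunContinuity.
Variables (R : realType) (T : topologicalType).
Implicit Types (f g : T -> R).

Lemma continuousDf f g : continuous f -> continuous g -> continuous (fun x => f x + g x).
Proof. by move=> cf cg x; apply: continuousD; [exact: cf | exact: cg]. Qed.

Lemma continuousBf f g : continuous f -> continuous g -> continuous (fun x => f x - g x).
Proof. by move=> cf cg x; apply: continuousB; [exact: cf | exact: cg]. Qed.

Lemma continuousMf f g : continuous f -> continuous g -> continuous (fun x => f x * g x).
Proof. by move=> cf cg x; apply: continuousM; [exact: cf | exact: cg]. Qed.

Lemma continuous_minf f g :
  continuous f -> continuous g -> continuous (fun x => Num.min (f x) (g x)).
Proof. by move=> cf cg x; apply: continuous_min; [exact: cf | exact: cg]. Qed.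

Lemma continuous_maxf f g :
  continuous f -> continuous g -> continuous (fun x => Num.max (f x) (g x)).
Proof. by move=> cf cg x; apply: continuous_max; [exact: cf | exact: cg]. Qed.

Lemma continuous_compf f (u : R -> R) :
  continuous f -> continuous u -> continuous (fun x => u (f x)).
Proof. by move=> cf cu x; apply: (continuous_comp (f := f)); [exact: cf | exact: cu]. Qed.

Lemma ratio_itv (B D : R) : 0 <= B <= D -> 0 <= B / D <= 1.
Proof.
move=> /andP[B0 BD]; have [->|D0] := eqVneq D 0; first by rewrite invr0 mulr0 lexx ler01.
have D_gt0 : 0 < D by rewrite lt_neqAle eq_sym D0 (le_trans B0).
by rewrite divr_ge0 ?(ltW D_gt0) //= ler_pdivrMr ?mul1r.
Qed.

Lemma continuous_mul_ratio (A B D : T -> R) (x : T) :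
  {for x, continuous A} -> {for x, continuous B} -> {for x, continuous D} ->
  (forall t, 0 <= B t <= D t) -> (D x = 0 -> A x = 0) ->
  {for x, continuous (fun t => A t * B t / D t)}.
Proof.
move=> cA cB cD BD DA; have [Dx0|Dx0] := eqVneq (D x) 0; last first.
  by apply: continuousM; [exact: continuousM | exact: continuousV].
rewrite /prop_for /continuous_at /= Dx0 invr0 mulr0.
have nA0 : `|A t| @[t --> x] --> (0 : R).
  by have := cvg_norm cA; rewrite (DA Dx0) normr0; apply.
apply: (@squeeze_cvgr _ _ _ _ (fun t => - `|A t|) (fun t => `|A t|)) => //; last first.
  by rewrite -oppr0; exact: cvgN.
apply: nearW => t; rewrite -ler_norml -mulrA normrM ler_piMr //.
by have /andP[r0 r1] := ratio_itv (BD t); rewrite ger0_norm.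
Qed.

End RealFunContinuity.

Section Flows.
Variable R : realType.
Implicit Types (t : R) (p : pt R) (v : pt R -> pt R).

Definition equivariant_flow (H : R -> pt R -> pt R) : Prop :=
  [/\ continuous (fun q : R * pt R => H q.1 q.2),
      (forall t p, (H t p).2 = p.2),
      (forall t (m n : int) p, H t (shift m n p) = shift m n (H t p)),
      (forall p, H 0 p = p) &
      (forall t, exists2 Hi : pt R -> pt R, continuous Hi &
         cancel (H t) Hi /\ cancel Hi (H t))].

Lemma equivariant_flow_comp (H1 H2 : R -> pt R -> pt R) :
  equivariant_flow H1 -> equivariant_flow H2 ->
  equivariant_flow (fun t => H2 t \o H1 t).
Proof.
move=> [c1 z1 e1 i1 inv1] [c2 z2 e2 i2 inv2]; split => /=.
- have c1' : continuous (fun q : R * pt R => (q.1, H1 q.1 q.2)).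
    by apply: continuous_pair => // q; exact: cvg_fst.
  by move=> q; exact: (continuous_comp (c1' q) (c2 _)).
- by move=> t p; rewrite z2 z1.
- by move=> t m n p; rewrite e1 e2.
- by move=> p; rewrite i1 i2.
move=> t; have [G1 cG1 [K1 K1']] := inv1 t; have [G2 cG2 [K2 K2']] := inv2 t.
exists (G1 \o G2); first by move=> p; apply: continuous_comp; [exact: cG2 | exact: cG1].
by split; apply: can_comp.
Qed.

Lemma equivariant_flow_ambient_isotopy (H : R -> pt R -> pt R) :
  equivariant_flow H -> ambient_isotopy H.
Proof.
move=> [cH zH eH iH invH].
split=> [|t _|t _ m n p _|p _]; [exact: continuous_subspaceT | | exact: eH | exact: iH].
have [Hi cHi [K K']] := invH t.
have zHi p : (Hi p).2 = p.2 by rewrite -[in RHS](K' p) zH.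
exists Hi; split => [|p|p|p _|p _]; rewrite /slab /= ?zH ?zHi //.
exact: continuous_subspaceT.
Qed.

Definition translation_flow v t p : pt R := p + t *: v p.

Lemma equivariant_translation_flow v : continuous v ->
  (forall p, (v p).2 = 0) -> (forall (m n : int) p, v (shift m n p) = v p) ->
  (forall s p, v (p + s *: v p) = v p) ->
  equivariant_flow (translation_flow v).
Proof.
move=> cv v_level v_shift v_along; split => [q|t p|t m n p|p|t].
- apply: continuousD; first exact: cvg_snd.
  by apply: continuousZ; [exact: cvg_fst | apply: continuous_comp; [exact: cvg_snd | exact: cv]].
- by rewrite /translation_flow /= v_level scaler0 addr0.
- rewrite /translation_flow v_shift; case: p => [[a b] c].
  case: (v _) (v_level (a, b, c)) => [[x y] w] /= ->; rewrite /shift /=.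
  by congr (_, _, _); rewrite ?scaler0 ?addr0 addrAC.
- by rewrite /translation_flow scale0r addr0.
exists (translation_flow v (- t)); rewrite /translation_flow.
  move=> p; apply: (continuousD (f := id)); first exact: cvg_id.
  by apply: continuousZl_tmp; exact: cv.
by split=> p; rewrite v_along scaleNr ?addrK ?subrK.
Qed.

End Flows.

Section Shears.
Variable R : realType.
Implicit Types (w : R -> R -> R) (p : pt R).

Definition hshear w p : pt R := (w p.1.2 p.2, 0, 0).
Definition vshear w p : pt R := (0, w p.1.1 p.2, 0).

Lemma equivariant_hshear_flow w : continuous (fun q : R * R => w q.1 q.2) ->
  (forall (n : int) y z, w (y + n%:~R) z = w y z) -> equivariant_flow (translation_flow (hshear w)).
Proof.
move=> cw pw; apply: equivariant_translation_flow => [|//|m n [[a b] c]|s [[a b] c]].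
- have cproj : continuous (fun p : pt R => (p.1.2, p.2)).
    apply: continuous_pair => p; last exact: cvg_snd.
    by apply: continuous_comp; [exact: cvg_fst | exact: cvg_snd].
  apply: continuous_pair; last by move=> ?; exact: cvg_cst.
  apply: continuous_pair; last by move=> ?; exact: cvg_cst.
  by move=> p; exact: continuous_comp (cproj p) (cw _).
- by rewrite /hshear /= pw.
- by rewrite /hshear /= scaler0 !addr0.
Qed.

Lemma equivariant_vshear_flow w : continuous (fun q : R * R => w q.1 q.2) ->
  (forall (n : int) y z, w (y + n%:~R) z = w y z) -> equivariant_flow (translation_flow (vshear w)).
Proof.
move=> cw pw; apply: equivariant_translation_flow => [|//|m n [[a b] c]|s [[a b] c]].
- have cproj : continuous (fun p : pt R => (p.1.1, p.2)).
    apply: continuous_pair => p; last exact: cvg_snd.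
    by apply: continuous_comp; [exact: cvg_fst | exact: cvg_fst].
  apply: continuous_pair; last by move=> ?; exact: cvg_cst.
  apply: continuous_pair; first by move=> ?; exact: cvg_cst.
  by move=> p; exact: continuous_comp (cproj p) (cw _).
- by rewrite /vshear /= pw.
- by rewrite /vshear /= scaler0 !addr0.
Qed.

Lemma translation_flow_hshear w t a b z :
  translation_flow (hshear w) t (a, b, z) = (a + t * w b z, b, z).
Proof. by rewrite /translation_flow /hshear; congr (_, _, _); rewrite /= ?scaler0 ?addr0. Qed.

Lemma translation_flow_vshear w t a b z :
  translation_flow (vshear w) t (a, b, z) = (a, b + t * w a z, z).
Proof. by rewrite /translation_flow /vshear; congr (_, _, _); rewrite /= ?scaler0 ?addr0. Qed.

End Shears.

Section SinPi.
Context {R : realType}.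
Implicit Types (y u G H : R) (m : int).

Lemma sinpiD_int y m : sin (pi * (y + m%:~R)) = (-1) ^+ `|m|%N * sin (pi * y).
Proof.
have sinpiDn y' (n : nat) : sin (pi * (y' + n%:R)) = (-1) ^+ n * sin (pi * y').
  by rewrite mulrDr mulr_natr alternatingn //; exact: sinDpi.
case: m => n; first exact: sinpiDn.
rewrite NegzE abszN absz_nat.
have := sinpiDn (y - n.+1%:R) n.+1; rewrite subrK => ->.
by rewrite mulrA -exprMn mulrNN mulr1 expr1n mul1r.
Qed.

Lemma sinpi_int m : sin (pi * m%:~R) = 0 :> R.
Proof. by rewrite -[m%:~R]add0r sinpiD_int mulr0 sin0 mulr0. Qed.

Lemma sinpi_ge0 u : 0 <= u <= 1 -> 0 <= sin (pi * u).
Proof.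
by move=> /andP[u0 u1]; apply: sin_ge0_pi; rewrite mulr_ge0 ?pi_ge0 ?ler_piMr ?pi_ge0.
Qed.

Lemma sinpi_gt0 u : 0 < u < 1 -> 0 < sin (pi * u).
Proof.
by move=> /andP[u0 u1]; apply: sin_gt0_pi; rewrite mulr_gt0 ?pi_gt0 ?gtr_pMr ?pi_gt0.
Qed.

Lemma continuous_sinpi : continuous (fun y : R => sin (pi * y)).
Proof.
by move=> y; exact: continuous_comp (@mulrl_continuous _ pi y) (@continuous_sin _ _).
Qed.

Lemma sinpi_floor y :
  sin (pi * y) = (-1) ^+ `|Num.floor y|%N * sin (pi * (y - (Num.floor y)%:~R)).
Proof. by rewrite -sinpiD_int subrK. Qed.

Lemma sinpi_fract_gt0 y : y \isn't a Num.int ->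
  0 < sin (pi * (y - (Num.floor y)%:~R)).
Proof.
move=> yNint; apply: sinpi_gt0; have /andP[fl_le lt_fl1] := floor_itv y.
rewrite subr_gt0 ltrBlDl -intrD1 lt_fl1 andbT lt_neqAle fl_le andbT.
by apply: contraNneq yNint => /eqP; rewrite -intrEfloor.
Qed.

Lemma sinpi_eq0 y : (sin (pi * y) == 0) = (y \is a Num.int).
Proof.
apply/idP/idP => [|/intrP[m ->]]; last by rewrite sinpi_int.
apply: contraLR => yNint; rewrite sinpi_floor mulf_neq0 ?signr_eq0 //.
by rewrite gt_eqF // sinpi_fract_gt0.
Qed.

Lemma sinpi_mul_gt0 G H : Num.floor G = Num.floor H ->
  G \isn't a Num.int -> H \isn't a Num.int -> 0 < sin (pi * G) * sin (pi * H).
Proof.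
move=> flGH GNint HNint; rewrite (sinpi_floor G) (sinpi_floor H) -flGH.
rewrite mulrACA -expr2 sqrr_sign mul1r.
by rewrite mulr_gt0 ?sinpi_fract_gt0 // flGH sinpi_fract_gt0.
Qed.

Lemma segment_not_int G H l : 0 < sin (pi * G) * sin (pi * H) ->
  `|H - G| < 1 -> 0 <= l <= 1 -> G + l * (H - G) \isn't a Num.int.
Proof.
set D := H - G => + D1 /andP[l0 l1]; apply: contraPN => /intrP[m hm].
have -> : G = - (l * D) + m%:~R by rewrite -hm; ring.
have -> : H = (1 - l) * D + m%:~R by rewrite -hm /D; ring.
apply/negP; rewrite !sinpiD_int mulrACA -expr2 sqrr_sign mul1r mulrN sinN mulNr.
rewrite oppr_gt0 -leNgt.
have sin_ge0 a : 0 <= a <= 1 -> 0 <= sin (pi * (a * `|D|)).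
  move=> /andP[a0 a1]; apply: sinpi_ge0.
  by rewrite mulr_ge0 ?mulr_ile1 // ltW.
have l_itv : 0 <= l <= 1 by rewrite l0 l1.
have l'_itv : 0 <= 1 - l <= 1 by rewrite subr_ge0 l1 gerBl.
case: (lerP 0 D) => D0.
  by rewrite -(ger0_norm D0) mulr_ge0 ?sin_ge0.
by rewrite -[D]opprK -(ltr0_norm D0) !mulrN !sinN mulrNN mulr_ge0 ?sin_ge0.
Qed.
End SinPi.

Section Weight.
Context {R : realType}.
Implicit Types (y z : R) (m : int).

Definition sinpi2 y : R := sin (pi * y) ^+ 2.

Lemma sinpi2_ge0 y : 0 <= sinpi2 y.
Proof. exact: sqr_ge0. Qed.

Lemma sinpi2D_int y m : sinpi2 (y + m%:~R) = sinpi2 y.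
Proof. by rewrite /sinpi2 sinpiD_int exprMn sqrr_sign mul1r. Qed.

Lemma sinpi2_eq0 y : (sinpi2 y == 0) = (y \is a Num.int).
Proof. by rewrite /sinpi2 sqrf_eq0 sinpi_eq0. Qed.

Lemma continuous_sinpi2 : continuous sinpi2.
Proof.
have -> : sinpi2 = fun y => sin (pi * y) * sin (pi * y).
  by apply: funext => y; rewrite /sinpi2 expr2.
by move=> y; apply: continuousM; exact: continuous_sinpi.
Qed.

(* Capping sinpi2 y at sinpi2 (y0 z) keeps the weight bounded by c z even where S z
   tends to 0. *)
Definition weight (c y0 S : R -> R) y z := c z * Num.min (sinpi2 y) (sinpi2 (y0 z)) / S z.

Lemma continuous_weight (c y0 S : R -> R) : continuous c -> continuous y0 -> continuous S ->
  (forall z, sinpi2 (y0 z) <= S z) -> (forall z, S z = 0 -> c z = 0) ->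
  continuous (fun q : R * R => weight c y0 S q.1 q.2).
Proof.
move=> cc cy0 cS y0S Sc q; rewrite /weight.
apply: (continuous_mul_ratio (A := fun q : R * R => c q.2)) => [|||q'|].
- by apply: continuous_comp; [exact: cvg_snd | exact: cc].
- apply: continuous_min; apply: continuous_comp; try exact: continuous_sinpi2.
    exact: cvg_fst.
  by apply: continuous_comp; [exact: cvg_snd | exact: cy0].
- by apply: continuous_comp; [exact: cvg_snd | exact: cS].
- by rewrite le_min !sinpi2_ge0 /= ge_min (y0S q'.2) orbT.
- exact: Sc.
Qed.

Lemma weightD_int (c y0 S : R -> R) m y z : weight c y0 S (y + m%:~R) z = weight c y0 S y z.
Proof. by rewrite /weight sinpi2D_int. Qed.

Lemma weight_int (c y0 S : R -> R) m z : weight c y0 S m%:~R z = 0.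
Proof.
rewrite /weight.
have -> : sinpi2 m%:~R = 0 by apply/eqP; rewrite sinpi2_eq0 intr_int.
by rewrite (min_idPl (sinpi2_ge0 _)) mulr0 mul0r.
Qed.

Lemma weight_at (c y0 S : R -> R) z :
  weight c y0 S (y0 z) z = c z * sinpi2 (y0 z) / S z.
Proof. by rewrite /weight minxx. Qed.

Lemma weight_sinpi2_at (c y0 : R -> R) z : (sinpi2 (y0 z) = 0 -> c z = 0) ->
  weight c y0 (fun z => sinpi2 (y0 z)) (y0 z) z = c z.
Proof.
rewrite weight_at /=; have [s0 /(_ s0) ->|s0 _] := eqVneq (sinpi2 (y0 z)) 0.
  by rewrite s0 !mul0r.
by rewrite mulfK.
Qed.

End Weight.

Section LinkLift.
Variables (R : realType) (N k : nat).
Hypothesis kN : (k < N)%N.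
Local Notation L := ((N - k)%:R : R).

Definition column (z : R) : R := L * (1 - Num.max 0 (Num.min z 1)).

(* A point of the lift of L_f is recorded by its height z and the deck translation
   (m, n) that moves it off the fundamental lift of the curve, resp. of the vertical
   segment. *)
Definition levels : set (R * (int * int)) := [set q | 0 <= q.1 <= 1].

Definition curve_point (f : R -> R) (q : R * (int * int)) : pt R :=
  shift q.2.1 q.2.2 (column q.1, f (column q.1), q.1).

Definition lattice_point (q : R * (int * int)) : pt R := shift q.2.1 q.2.2 (0, 0, q.1).

Lemma L_gt0 : 0 < L.
Proof. by rewrite ltr0n subn_gt0. Qed.

Lemma column_itv z : 0 <= column z <= L.
Proof.
have c01 : 0 <= Num.max 0 (Num.min z 1) <= 1.
  by rewrite le_max lexx /= ge_max ler01 ge_min lexx orbT.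
have L0 := L_gt0; rewrite /column; apply/andP; split.
  by apply: mulr_ge0; lra.
by rewrite ler_piMr; lra.
Qed.

Lemma columnE z : 0 <= z <= 1 -> column z = L * (1 - z).
Proof. by move=> /andP[z0 z1]; rewrite /column (min_idPl z1) (max_idPr z0). Qed.

Lemma column_level x : 0 <= x <= L -> column (1 - x / L) = x.
Proof.
move=> /andP[x0 xL]; have L0 := L_gt0.
have xL01 : 0 <= x / L <= 1 by rewrite divr_ge0 ?(ltW L0) //= ler_pdivrMr ?mul1r.
rewrite columnE; last lra.
by rewrite subKr mulrC divfK // lt0r_neq0.
Qed.

Lemma link_liftE (f : R -> R) :
  link_lift N k f = curve_point f @` levels `|` lattice_point @` levels.
Proof.
apply/seteqP; split=> [[[a b] z]|_ [[q lq <-]|[q lq <-]]].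
- rewrite /link_lift /=.
  move=> [z01 [[x [x01 zx /intrP[m am] /intrP[n bn]]]|[/intrP[m am] /intrP[n bn]]]].
    left; exists (z, (m, n)) => //; rewrite /curve_point /shift /= zx column_level //.
    by rewrite -am -bn !(addrC x) !(addrC (f x)) !subrK.
  by right; exists (z, (m, n)) => //; rewrite /lattice_point /shift /= am bn !add0r.
- split=> //; left; exists (column q.1); rewrite column_itv /curve_point /shift /=.
  rewrite columnE // [L * _]mulrC mulfK ?lt0r_neq0 ?L_gt0 // subKr.
  by split; rewrite // addrAC subrr add0r intr_int.
- by split=> //; right; rewrite /lattice_point /shift /= !add0r !intr_int.
Qed.
End LinkLift.

Section Isotopy.
Variables (R : realType) (N k : nat) (g h : R -> R).
Local Notation L := ((N - k)%:R : R).
Local Notation col := (@column R N k).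
Hypotheses (kN : (k < N)%N)
  (cg : {within [set x : R | 0 <= x <= L], continuous g})
  (ch : {within [set x : R | 0 <= x <= L], continuous h})
  (gh0 : g 0 = h 0) (ghL : g L = h L)
  (g_notint : forall j : nat, (1 <= j <= N - k - 1)%N -> g j%:R \isn't a Num.int)
  (h_notint : forall j : nat, (1 <= j <= N - k - 1)%N -> h j%:R \isn't a Num.int)
  (floor_gh : forall j : nat, (1 <= j <= N - k - 1)%N ->
     Num.floor (g j%:R) = Num.floor (h j%:R)).
Implicit Types (z : R).

Definition gcol z := g (col z).
Definition hcol z := h (col z).
Definition gap z := hcol z - gcol z.
(* When positive, no integer lies between gcol z and hcol z (segment_not_int). *)
Definition clearance z :=
  Num.max 0 (sin (pi * gcol z) * sin (pi * hcol z)) * Num.max 0 (1 - `|gap z|).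
Definition offset z := clearance z / 2.
Definition shifted_col z := col z + offset z.
(* The vertical move from gcol z to hcol z is split between the columns shifted_col z
   and col z in proportion to sinpi2 there; den vanishes only when both columns are
   integral, and then gap z = 0 (gap_den). *)
Definition den z := sinpi2 (col z) + sinpi2 (shifted_col z).
Definition mid z := gcol z + gap z * sinpi2 (shifted_col z) / den z.

Lemma col_int z : col z \is a Num.int -> exists2 j, (j <= N - k)%N & col z = j%:R.
Proof.
have /andP[c0 cL] := column_itv kN z.
rewrite intrEge0 // => /natrP[j cj]; exists j => //.
by move: cL; rewrite cj ler_nat.
Qed.

Lemma clearance_ge0 z : 0 <= clearance z.
Proof. by rewrite mulr_ge0 // le_max lexx. Qed.

Lemma offset_ge0 z : 0 <= offset z.
Proof. by rewrite divr_ge0 ?clearance_ge0. Qed.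

Lemma offset_lt1 z : offset z < 1.
Proof.
have : clearance z <= 1.
  rewrite mulr_ile1 ?le_max ?lexx // ge_max ler01 /= ?gerBl //.
  apply: le_trans (ler_norm _) _; rewrite normrM.
  by apply: mulr_ile1; rewrite ?normr_ge0 ?sin_max.
rewrite /offset; lra.
Qed.

Lemma clearance_gt0 z : 0 < clearance z ->
  0 < sin (pi * gcol z) * sin (pi * hcol z) /\ `|gap z| < 1.
Proof.
rewrite /clearance.
have [s0|s0] := leP (sin (pi * gcol z) * sin (pi * hcol z)) 0; first by rewrite mul0r ltxx.
have [d0|d0] := leP (1 - `|gap z|) 0; first by rewrite mulr0 ltxx.
by rewrite subr_gt0 in d0.
Qed.

Lemma offset_interior z (j : nat) : (1 <= j <= N - k - 1)%N -> col z = j%:R ->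
  0 < offset z.
Proof.
move=> jint cj; rewrite divr_gt0 //.
have sgh : 0 < sin (pi * gcol z) * sin (pi * hcol z).
  by rewrite /gcol /hcol cj sinpi_mul_gt0 ?g_notint ?h_notint ?floor_gh.
have gap1 : `|gap z| < 1.
  have /andP[g1 g2] := floor_itv (g j%:R); have /andP[h1 h2] := floor_itv (h j%:R).
  rewrite /gap /hcol /gcol cj ltr_norml; move: g1 g2 h1 h2.
  by rewrite -floor_gh // intrD; lra.
have d_pos : 0 < 1 - `|gap z| by rewrite subr_gt0.
by rewrite /clearance (max_idPr (ltW sgh)) (max_idPr (ltW d_pos)) mulr_gt0.
Qed.

Lemma offset_gcol z : sinpi2 (gcol z) = 0 -> offset z = 0.
Proof.
move=> /eqP; rewrite /sinpi2 sqrf_eq0 => /eqP s0.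
by rewrite /offset /clearance s0 mul0r maxxx !mul0r.
Qed.

Lemma gap_den z : den z = 0 -> gap z = 0.
Proof.
move=> /eqP; rewrite paddr_eq0 ?sinpi2_ge0 // !sinpi2_eq0 => /andP[/col_int[j jL cj] sc].
rewrite /gap /hcol /gcol cj.
have [->|j0] := eqVneq j 0%N; first by rewrite gh0 subrr.
have [->|jNk] := eqVneq j (N - k)%N; first by rewrite ghL subrr.
have jint : (1 <= j <= N - k - 1)%N by apply/andP; split; lia.
have /andP[off0 off1] : 0 < offset z < 1 by rewrite (offset_interior jint cj) offset_lt1.
move: sc; rewrite /shifted_col cj rpredDl ?rpred_nat // => /intrP[m offm].
by move: off0 off1; rewrite offm ltr0z ltrz1; lia.
Qed.

Lemma offset_mid z : sinpi2 (mid z) = 0 -> offset z = 0.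
Proof.
move=> /eqP; rewrite sinpi2_eq0; apply: contraTeq => off_neq0.
have off_gt0 : 0 < offset z by rewrite lt_neqAle eq_sym off_neq0 offset_ge0.
have [sgh gap1] : 0 < sin (pi * gcol z) * sin (pi * hcol z) /\ `|gap z| < 1.
  by apply: clearance_gt0; move: off_gt0; rewrite /offset; lra.
rewrite /mid -mulrA mulrC /gap; apply: segment_not_int => //.
by apply: ratio_itv; rewrite sinpi2_ge0 /den lerDr sinpi2_ge0.
Qed.

Lemma continuous_col : continuous col.
Proof.
apply: continuousMf; first exact: cst_continuous.
apply: continuousBf; first exact: cst_continuous.
apply: continuous_maxf; first exact: cst_continuous.
by apply: continuous_minf; [move=> ?; exact: cvg_id | exact: cst_continuous].
Qed.

Lemma continuous_gcol : continuous gcol.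
Proof. exact: continuous_within_comp cg continuous_col (column_itv kN). Qed.

Lemma continuous_hcol : continuous hcol.
Proof. exact: continuous_within_comp ch continuous_col (column_itv kN). Qed.

Lemma continuous_gap : continuous gap.
Proof. exact: continuousBf continuous_hcol continuous_gcol. Qed.

Lemma continuous_offset : continuous offset.
Proof.
apply: continuousMf; last exact: cst_continuous.
apply: continuousMf; apply: continuous_maxf; try exact: cst_continuous.
  by apply: continuousMf; apply: (continuous_compf _ continuous_sinpi);
    [exact: continuous_gcol | exact: continuous_hcol].
apply: continuousBf; first exact: cst_continuous.
exact: continuous_compf continuous_gap (@norm_continuous _ _).
Qed.

Lemma continuous_shifted_col : continuous shifted_col.
Proof. exact: continuousDf continuous_col continuous_offset. Qed.

Lemma continuous_den : continuous den.
Proof.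
by apply: continuousDf; apply: (continuous_compf _ continuous_sinpi2);
  [exact: continuous_col | exact: continuous_shifted_col].
Qed.

Lemma sinpi2_shifted_col_le_den z : sinpi2 (shifted_col z) <= den z.
Proof. by rewrite lerDr sinpi2_ge0. Qed.

Lemma sinpi2_col_le_den z : sinpi2 (col z) <= den z.
Proof. by rewrite lerDl sinpi2_ge0. Qed.

Lemma continuous_mid : continuous mid.
Proof.
apply: continuousDf; first exact: continuous_gcol.
move=> z; apply: continuous_mul_ratio => [||||/gap_den//].
- exact: continuous_gap.
- by apply: continuous_comp; [exact: continuous_shifted_col | exact: continuous_sinpi2].
- exact: continuous_den.
- by move=> t; rewrite sinpi2_ge0 sinpi2_shifted_col_le_den.
Qed.

Definition shear_off := hshear (weight offset gcol (fun z => sinpi2 (gcol z))).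
Definition shear_mid := vshear (weight gap shifted_col den).
Definition shear_back :=
  hshear (weight (fun z => - offset z) mid (fun z => sinpi2 (mid z))).
Definition shear_rest := vshear (weight gap col den).

Definition isotopy (t : R) : pt R -> pt R :=
  translation_flow shear_rest t \o translation_flow shear_back t
  \o translation_flow shear_mid t \o translation_flow shear_off t.

Lemma isotopy_flow : equivariant_flow isotopy.
Proof.
have sinpi2_cont y0 : continuous y0 -> continuous (fun z => sinpi2 (y0 z)).
  by move=> cy0; exact: continuous_compf cy0 continuous_sinpi2.
apply: equivariant_flow_comp; last apply: equivariant_flow_comp;
  last apply: equivariant_flow_comp.
- apply: equivariant_hshear_flow; last exact: weightD_int.
  apply: continuous_weight => //.
  + exact: continuous_offset.
  + exact: continuous_gcol.
  + exact: sinpi2_cont continuous_gcol.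
  + exact: offset_gcol.
- apply: equivariant_vshear_flow; last exact: weightD_int.
  apply: continuous_weight => //.
  + exact: continuous_gap.
  + exact: continuous_shifted_col.
  + exact: continuous_den.
  + exact: sinpi2_shifted_col_le_den.
  + exact: gap_den.
- apply: equivariant_hshear_flow; last exact: weightD_int.
  apply: continuous_weight => //.
  + by move=> z; apply: continuousN; exact: continuous_offset.
  + exact: continuous_mid.
  + exact: sinpi2_cont continuous_mid.
  + by move=> z /offset_mid ->; rewrite oppr0.
- apply: equivariant_vshear_flow; last exact: weightD_int.
  apply: continuous_weight => //.
  + exact: continuous_gap.
  + exact: continuous_col.
  + exact: continuous_den.
  + exact: sinpi2_col_le_den.
  + exact: gap_den.
Qed.

Lemma mid_gap z : mid z + gap z * sinpi2 (col z) / den z = hcol z.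
Proof.
have [d0|d0] := eqVneq (den z) 0.
  move/eqP: (gap_den d0); rewrite /mid d0 invr0 !mulr0 !addr0 subr_eq0.
  by move=> /eqP.
rewrite /mid -addrA -mulrDl -mulrDr [sinpi2 _ + _]addrC -/(den z) mulfK //.
by rewrite /gap addrC subrK.
Qed.

Lemma isotopy_curve z : isotopy 1 (col z, gcol z, z) = (col z, hcol z, z).
Proof.
have off : translation_flow shear_off 1 (col z, gcol z, z) = (shifted_col z, gcol z, z).
  by rewrite translation_flow_hshear mul1r weight_sinpi2_at //; exact: offset_gcol.
have up : translation_flow shear_mid 1 (shifted_col z, gcol z, z) = (shifted_col z, mid z, z).
  by rewrite translation_flow_vshear mul1r weight_at.
have back : translation_flow shear_back 1 (shifted_col z, mid z, z) = (col z, mid z, z).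
  rewrite translation_flow_hshear mul1r weight_sinpi2_at ?addrK //.
  by move/offset_mid ->; rewrite oppr0.
have rest : translation_flow shear_rest 1 (col z, mid z, z) = (col z, hcol z, z).
  by rewrite translation_flow_vshear mul1r weight_at mid_gap.
by rewrite /isotopy /comp off up back rest.
Qed.

Lemma isotopy_lattice t z : isotopy t (0, 0, z) = (0, 0, z).
Proof.
have w0 (c y0 S : R -> R) : weight c y0 S 0 z = 0 by exact: (weight_int c y0 S 0).
have hfix (c y0 S : R -> R) :
    translation_flow (hshear (weight c y0 S)) t (0, 0, z) = (0, 0, z).
  by rewrite translation_flow_hshear w0 mulr0 addr0.
have vfix (c y0 S : R -> R) :
    translation_flow (vshear (weight c y0 S)) t (0, 0, z) = (0, 0, z).
  by rewrite translation_flow_vshear w0 mulr0 addr0.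
rewrite /isotopy /comp [translation_flow shear_off _ _]hfix.
by rewrite [translation_flow shear_mid _ _]vfix [translation_flow shear_back _ _]hfix vfix.
Qed.

Lemma isotopy_link : isotopy 1 @` link_lift N k g = link_lift N k h.
Proof.
have [_ _ isotopy_shift _ _] := isotopy_flow.
rewrite !link_liftE // image_setU !(image_comp _ (isotopy 1)).
congr (_ `|` _); apply: eq_imagel => -[z [m n]] _ /=.
  by rewrite /curve_point isotopy_shift isotopy_curve.
by rewrite /lattice_point isotopy_shift isotopy_lattice.
Qed.

End Isotopy.
Theorem corollary4p1 (R : realType) (N k : nat) (g h : R -> R) :
  (1 <= k)%N -> (k < N)%N ->
  monotone_curve N k g -> monotone_curve N k h ->
  (forall j : nat, (1 <= j <= N - k - 1)%N ->
     Num.floor (g j%:R) = Num.floor (h j%:R)) ->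
  links_isotopic N k g h.
Proof.
move=> _ kN [cg _ g0 gL g_notint] [ch _ h0 hL h_notint] floor_gh.
have gh0 : g 0 = h 0 by rewrite g0 h0.
have ghL : g (N - k)%:R = h (N - k)%:R by rewrite gL hL.
have := isotopy_flow kN cg ch gh0 ghL g_notint h_notint floor_gh.
move=> /equivariant_flow_ambient_isotopy isotopy_ambient.
exists (isotopy N k g h); split => //.
exact: isotopy_link kN cg ch gh0 ghL g_notint h_notint floor_gh.
Qed.
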